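(* Let $\tilde G$ be a disjoint set of pseudo-generators and let $\tilde H\subseteq\tilde G$ consist of $r$ distinct pseudo-generators. Then every operator in the pseudo-product of $\tilde H$ has weight at least $r$.
   Context: $\mathfrak P$ is the group of $N$-qubit Pauli operators modulo phases; $X_k,Z_k$ are the Pauli $X$, $Z$ on qubit $k$; $\mathcal G(T)$ is the set of all products of elements of $T$ (including the identity $I$). The weight of a Pauli operator is its number of non-identity tensor factors. A pseudo-generator is a set of one or two Pauli operators. A set $\tilde G$ of pseudo-generators is disjoint if for every $\tilde g\in\tilde G$ there is a qubit $k$ such that every operator in $\mathcal G(\tilde g)\setminus\{I\}$ anticommutes with $X_k$ or with $Z_k$ (or both), while both $X_k$ and $Z_k$ commute with every operator in $\bigcup_{\tilde g'\in\tilde G\setminus\{\tilde g\}}\mathcal G(\tilde g')$. The pseudo-product of a set of $r$ pseudo-generators $\tilde g_1,\dots,\tilde g_r$ is the set of all products $x_1x_2\cdots x_r$ with $x_j\in\mathcal G(\tilde g_j)\setminus\{I\}$ for each $j$. *)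

From mathcomp Require Import all_boot.
Set Implicit Arguments. Unset Strict Implicit. Unset Printing Implicit Defensive.

(* An N-qubit Pauli operator modulo phases: at each qubit k, a pair (x,z) of
   bits, (false,false)=I, (true,false)=X, (false,true)=Z, (true,true)=Y. *)
Definition pauli (N : nat) := {ffun 'I_N -> bool * bool}.

Definition pI {N : nat} : pauli N := [ffun _ => (false, false)].

Definition pmul {N : nat} (p q : pauli N) : pauli N :=
  [ffun k => ((p k).1 (+) (q k).1, (p k).2 (+) (q k).2)].

Definition pX {N : nat} (k : 'I_N) : pauli N :=
  [ffun j => (j == k, false)].
Definition pZ {N : nat} (k : 'I_N) : pauli N :=
  [ffun j => (false, j == k)].

(* p and q anticommute iff the symplectic form is odd *)
Definition anticomm {N : nat} (p q : pauli N) : bool :=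
  \big[addb/false]_(k < N) (((p k).1 && (q k).2) (+) ((p k).2 && (q k).1)).

Definition weight {N : nat} (p : pauli N) : nat :=
  #|[set k : 'I_N | p k != (false, false)]|.

Definition gen {N : nat} (T : {set pauli N}) : {set pauli N} :=
  [set \big[pmul/pI]_(s in S) s | S : {set pauli N} in powerset T].

Definition pseudo_gen {N : nat} (g : {set pauli N}) : bool :=
  (1 <= #|g| <= 2).

Definition disjoint_pg {N : nat} (Gt : {set {set pauli N}}) : Prop :=
  (forall g, g \in Gt -> pseudo_gen g) /\
  forall g, g \in Gt -> exists k : 'I_N,
    (forall p, p \in gen g :\ pI -> anticomm p (pX k) || anticomm p (pZ k)) /\
    (forall g', g' \in Gt :\ g -> forall p, p \in gen g' ->
        ~~ anticomm (pX k) p && ~~ anticomm (pZ k) p).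

Definition pseudo_prod {N : nat} (H : {set {set pauli N}}) : {set pauli N} :=
  [set p | [exists f : {ffun {set pauli N} -> pauli N},
     [forall g in H, f g \in gen g :\ pI] && (p == \big[pmul/pI]_(g in H) f g)]].

(* Every pseudo-generator g of a disjoint family has a qubit k at which each
   non-identity element of G(g) acts nontrivially while every element of
   G(g'), g' <> g, acts trivially.  In a pseudo-product over r pseudo-generators
   the factor from g is therefore the only one acting at its qubit, so the
   product acts nontrivially there; and distinct g give distinct qubits. *)
From mathcomp Require Import all_boot.
Set Implicit Arguments. Unset Strict Implicit.

Section PauliAlgebra.

Variable N : nat.
Implicit Types (p q : pauli N) (k : 'I_N).

Lemma big_addb_pred1 (b : 'I_N -> bool) k :
  \big[addb/false]_(j < N) ((j == k) && b j) = b k.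
Proof. by rewrite (bigD1 k) //= eqxx big1 ?addbF // => j /negbTE ->. Qed.

Lemma anticommXl k q : anticomm (pX k) q = (q k).2.
Proof.
rewrite /anticomm -(big_addb_pred1 (fun j => (q j).2) k).
by apply: eq_bigr => j _; rewrite ffunE /= addbF.
Qed.

Lemma anticommZl k q : anticomm (pZ k) q = (q k).1.
Proof.
rewrite /anticomm -(big_addb_pred1 (fun j => (q j).1) k).
by apply: eq_bigr => j _; rewrite ffunE.
Qed.

Lemma anticommXr k q : anticomm q (pX k) = (q k).2.
Proof.
rewrite /anticomm -(big_addb_pred1 (fun j => (q j).2) k).
by apply: eq_bigr => j _; rewrite ffunE /= andbF andbC.
Qed.

Lemma anticommZr k q : anticomm q (pZ k) = (q k).1.
Proof.
rewrite /anticomm -(big_addb_pred1 (fun j => (q j).1) k).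
by apply: eq_bigr => j _; rewrite ffunE /= andbF addbF andbC.
Qed.

Lemma anticommXZr k q :
  anticomm q (pX k) || anticomm q (pZ k) = (q k != (false, false)).
Proof. by rewrite anticommXr anticommZr; case: (q k) => [[] []]. Qed.

Lemma commXZl k q :
  ~~ anticomm (pX k) q && ~~ anticomm (pZ k) q = (q k == (false, false)).
Proof. by rewrite anticommXl anticommZl; case: (q k) => [[] []]. Qed.

Lemma big_pmulE (I : Type) (s : seq I) (P : pred I) (F : I -> pauli N) k :
  (\big[pmul/pI]_(i <- s | P i) F i) k =
  (\big[addb/false]_(i <- s | P i) (F i k).1,
   \big[addb/false]_(i <- s | P i) (F i k).2).
Proof.
elim: s => [|a s IH]; first by rewrite !big_nil ffunE.
by rewrite !big_cons; case: (P a); rewrite ?ffunE IH.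
Qed.

Lemma big_pmul_at_only (I : finType) (A : {set I}) (F : I -> pauli N) i k :
  i \in A -> (forall j, j \in A -> j != i -> F j k = (false, false)) ->
  (\big[pmul/pI]_(j in A) F j) k = F i k.
Proof.
move=> iA F0; have F0' j : (j \in A) && (j != i) -> F j k = (false, false).
  by case/andP; apply: F0.
rewrite big_pmulE (bigD1 i) //= [X in (_, X)](bigD1 i) //=.
by rewrite !big1 ?addbF; [case: (F i k) | move=> j /F0' -> | move=> j /F0' ->].
Qed.

End PauliAlgebra.

Lemma card_le_exclusive_witness (T K : finType) (A : {set T}) (S : {set K})
    (R : T -> K -> bool) :
  (forall x, x \in A -> exists2 k, k \in S & R x k) ->
  {in A &, forall x y k, R x k -> R y k -> x = y} ->
  #|A| <= #|S|.
Proof.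
move=> witness exclusive.
have [->|[x0 x0A]] := set_0Vmem A; first by rewrite cards0.
have [k0 _ _] := witness x0 x0A.
pose w x := odflt k0 [pick k in S | R x k].
have wP x : x \in A -> (w x \in S) && R x (w x).
  move=> xA; rewrite /w; case: pickP => [k /andP[] //|none].
  by have [k kS /(conj kS)/andP] := witness x xA; rewrite none.
have w_inj : {in A &, injective w}.
  move=> x y xA yA exy; have /andP[_ Rx] := wP x xA.
  by have /andP[_] := wP y yA; rewrite -exy; apply: exclusive.
rewrite -(card_in_imset w_inj); apply/subset_leq_card/subsetP.
by move=> _ /imsetP[x xA ->]; have /andP[] := wP x xA.
Qed.

Definition separating_qubit N (Gt : {set {set pauli N}}) g (k : 'I_N) :=
  [forall p in gen g :\ pI, p k != (false, false)] &&
  [forall g' in Gt :\ g, forall p in gen g', p k == (false, false)].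

Lemma disjoint_pg_separating N (Gt : {set {set pauli N}}) g :
  disjoint_pg Gt -> g \in Gt -> exists k, separating_qubit Gt g k.
Proof.
move=> [_ sep] gG; have [k [nontriv triv]] := sep g gG; exists k.
apply/andP; split; apply/forall_inP.
- by move=> p /nontriv; rewrite anticommXZr.
- by move=> g' /triv triv'; apply/forall_inP => p /triv'; rewrite commXZl.
Qed.

Theorem lemma12 (N : nat) (Gt Ht : {set {set pauli N}}) (r : nat) :
  disjoint_pg Gt -> Ht \subset Gt -> #|Ht| = r ->
  forall p, p \in pseudo_prod Ht -> r <= weight p.
Proof.
move=> disj /subsetP sHG <- _ /[!inE] /existsP[f /andP[/forall_inP fP /eqP ->]].
have fk g g' k : g \in Ht -> g' \in Ht -> separating_qubit Gt g k ->
    (f g' k == (false, false)) = (g' != g).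
  move=> gH g'H /andP[/forall_inP nontriv /forall_inP triv].
  have [->|ne] := eqVneq g' g; first exact/negbTE/nontriv/fP.
  have g'G : g' \in Gt :\ g by rewrite !inE ne sHG.
  by have /forall_inP := triv g' g'G; apply; have /setD1P[] := fP g' g'H.
apply: (card_le_exclusive_witness (R := separating_qubit Gt)).
- move=> g gH; have [k sep] := disjoint_pg_separating disj (sHG g gH).
  exists k => //; rewrite inE (big_pmul_at_only (i := g)) //.
    by rewrite (fk g) ?eqxx.
  by move=> g' g'H ne; apply/eqP; rewrite (fk g).
- move=> g g' gH g'H k sep sep'; apply/eqP; rewrite eq_sym; apply/negPn.
  by rewrite -(fk g g' k) // (fk g' g' k) ?eqxx.
Qed.
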